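(* Let $1<n\leq m$ and let $v\in Z_{n,m}$ with $I_c(v)\subseteq[1,m]$ and $\sum_{i\in I_c(v)}v_i=0$. Then $$d(v,0)\leq\sum_{i=1}^{p_l(v)}i+\sum_{i=1}^{m-p_r(v)}i+\lfloor\tfrac{\gamma}{2}\rfloor\lceil\tfrac{\gamma}{2}\rceil,$$ where $\gamma=|I_c(v)|$.
   Context: Elements of $\mathbb{Z}_n$ are identified with representatives in $\{0,\dots,n-1\}$. $Z_{n,m}$ has vertices $u=(u_0,\dots,u_{m+1})\in\mathbb{Z}_n\times\{-1,0,1\}^m\times\mathbb{Z}_n$ with $\sum u_i\equiv0\pmod n$; $u,v$ adjacent if there is $0\leq i\leq m$ with $u_j=v_j$ for $j\notin\{i,i+1\}$ and either ($u_i=v_i+1$, $u_{i+1}=v_{i+1}-1$) or ($u_i=v_i-1$, $u_{i+1}=v_{i+1}+1$), arithmetic in coordinates $0,m+1$ in $\mathbb{Z}_n$. $d$ is graph distance, $0$ the all-zero vertex. $\operatorname{Piv}(v)$ is the set of $-1\le p\le m+1$ with $n\mid\sum_{i=0}^pv_i$ (empty sum $0$). $p_l(v)=\max\{p\in\operatorname{Piv}(v):p<\frac m2\}$, $p_r(v)=\min\{p\in\operatorname{Piv}(v):p\ge\frac m2\}$, $I_c(v)=\{p_l(v)+1,\dots,p_r(v)\}$. *)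

From HB Require Import structures.
From mathcomp Require Import all_boot all_order all_algebra.
Unset Printing Implicit Defensive.
Import Order.TTheory GRing.Theory Num.Theory.

(* A vertex of Z_{n,m} is stored as a function
   u : 'I_(m+2) -> int, coordinate k being u_k (k = 0, ..., m+1). *)
Definition V (m : nat) := {ffun 'I_m.+2 -> int}.

Definition zeroV (m : nat) : V m := [ffun => 0%R].

Definition endcoord (m : nat) (k : 'I_m.+2) : bool := (k == ord0) || (k == ord_max).

Definition inZ (n m : nat) (u : V m) : bool :=
  [forall k : 'I_m.+2,
     if endcoord m k then (0 <= u k)%R && (u k < n%:Z)%R
     else u k \in [:: (-1)%R; 0%R; 1%R]]
  && (n%:Z %| (\sum_(k < m.+2) u k)%R)%Z.

Definition coord_eq (n m : nat) (k : 'I_m.+2) (a b : int) : bool :=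
  if endcoord m k then (a == b %[mod n%:Z])%Z else a == b.

Definition adj (n m : nat) (u v : V m) : bool :=
  [&& inZ n m u, inZ n m v &
  [exists i : 'I_m.+2, exists j : 'I_m.+2,
    [&& (j == i.+1 :> nat),
        [forall k : 'I_m.+2, ((k != i) && (k != j)) ==> (u k == v k)] &
        (coord_eq n m i (u i) (v i + 1)%R && coord_eq n m j (u j) (v j - 1)%R)
     || (coord_eq n m i (u i) (v i - 1)%R && coord_eq n m j (u j) (v j + 1)%R)]]].

Definition dist_le (n m : nat) (u w : V m) (k : nat) : Prop :=
  exists p : seq (V m),
    [/\ all (inZ n m) (u :: p), path (adj n m) u p, last u p = w & size p <= k].

(* prefix sum of the first q coordinates: S v q = sum_{i=0}^{q-1} v_i,
   so that p is a pivot iff n | S v (p+1)  (p = -1 gives the empty sum) *)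
Definition psum (m : nat) (v : V m) (q : nat) : int :=
  (\sum_(i < m.+2 | (i < q)%N) v i)%R.

(* p_l(v) = max{p in Piv(v) : p < m/2}; written with q = p+1 in [0, m+2]:
   p < m/2  <->  2q < m+2 *)
Definition pl (n m : nat) (v : V m) : int :=
  ((\max_(q < m.+3 | (n%:Z %| psum m v q)%Z && (2 * q < m + 2)%N) q)%:Z - 1)%R.

(* p_r(v) = min{p in Piv(v) : p >= m/2};  p >= m/2  <->  m+2 <= 2q *)
Definition pr (n m : nat) (v : V m) : int :=
  ((\big[minn/m.+2]_(q < m.+3 | (n%:Z %| psum m v q)%Z && (m + 2 <= 2 * q)%N) q)%:Z
     - 1)%R.

Definition Ic (n m : nat) (v : V m) : seq nat :=
  [seq i <- iota 0 m.+2 | ((pl n m v < i%:Z) && (i%:Z <= pr n m v))%R].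

(* Write L = p_l(v) and R = p_r(v).  We walk from v to 0 in Z_{n,m}, keeping the
   invariant that n divides u_0 + ... + u_L and u_{L+1} + ... + u_R = 0 ([admissible]),
   while every step lowers the potential
     Phi(u) = sum_{1<=k<=L} k |u_k| + sum_{R<k<=m} (m+1-k) |u_k| + sum_{L<g<R} |P_g(u)|,
   where P_g(u) = u_{L+1} + ... + u_g ([cumsum u g]).  If the block [1, L] is not zero,
   its leftmost nonzero coordinate is moved one place to the left (onto a zero coordinate,
   or absorbed modulo n by u_0); the block (R, m] is treated symmetrically.  Otherwise, at
   a g maximising |P_g| > 0, one unit is moved between g and g+1 so as to lower |P_g|,
   leaving every other P_h unchanged.  When no move applies, u = 0.  Finally
   |P_g(v)| <= min(g - L, R - g), and sum_{0<t<gamma} min(t, gamma - t) is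
   floor(gamma/2) ceil(gamma/2) for gamma = R - L, which bounds Phi(v). *)

From mathcomp Require Import all_boot all_order all_algebra zify ring.
Import Order.TTheory GRing.Theory.

Lemma big_ord_range {V : Type} {idx : V} (op : Monoid.law idx) N a b (F : nat -> V) :
  b <= N -> \big[op/idx]_(k < N | a <= k < b) F k = \big[op/idx]_(a <= k < b) F k.
Proof.
move=> bN; rewrite -(big_mkord (fun k => a <= k < b)) -big_nat_widen //.
by rewrite [RHS](big_nat_widenl _ 0).
Qed.

Lemma sum_min_dist_step k :
  (\sum_(1 <= t < k.+2) minn t (k.+2 - t) = \sum_(1 <= t < k) minn t (k - t) + k.+1)%N.
Proof.
rewrite big_ltn // (big_addn 1 k.+2 1) subn1 /=.
rewrite (eq_big_nat _ _ (F2 := fun t => minn t (k - t) + 1)%N) => [|t tk]; last lia.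
rewrite big_split /= sum_nat_const_nat.
case: k => [|k]; first by rewrite !big_geq.
by rewrite big_nat_recr //= subnn minn0; lia.
Qed.

Lemma sum_min_dist g : (\sum_(1 <= t < g) minn t (g - t) = g./2 * uphalf g)%N.
Proof.
elim/ltn_ind: g => -[|[|k]] IH; try by rewrite big_geq.
rewrite sum_min_dist_step IH //=.
by have := uphalf_half k; have := odd_double_half k; nia.
Qed.

Lemma big_off2 {V : nmodType} {I : finType} (Q : pred I) (f g : I -> V) (i j : I) :
  i != j -> (forall k, k != i -> k != j -> f k = g k) ->
  (\sum_(k | Q k) f k + ((if Q i then g i else 0) + (if Q j then g j else 0)) =
   \sum_(k | Q k) g k + ((if Q i then f i else 0) + (if Q j then f j else 0)))%R.
Proof.
move=> ij fg; rewrite !(big_mkcond Q) (bigD1 i) //= (bigD1 j) 1?eq_sym //=.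
rewrite [in RHS](bigD1 i) //= [in RHS](bigD1 j) 1?eq_sym //=.
rewrite (eq_bigr (fun k => if Q k then g k else 0%R)) => [|k /andP[ki kj]]; last by rewrite fg.
by rewrite (AC ((1*2)*2) ((4*(5*3))*(1*2))).
Qed.

Lemma dvdz_small_eq0 (d x : int) : (0 <= x < d)%R -> (d %| x)%Z -> x = 0.
Proof. by move=> /modz_small xE /dvdz_mod0P; rewrite xE. Qed.

Lemma endcoordE m (k : 'I_m.+2) : endcoord m k = (k == 0 :> nat) || (k == m.+1 :> nat).
Proof. by []. Qed.

Lemma inner_endcoord m (k : 'I_m.+2) : (1 <= k <= m) = ~~ endcoord m k.
Proof. by rewrite endcoordE; have := ltn_ord k; lia. Qed.

Section Znm.
Local Open Scope ring_scope.
Variables n m : nat.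
Implicit Types (u : V m) (i j k : 'I_m.+2).

Lemma inZ_inner {u k} : inZ n m u -> ~~ endcoord m k -> u k \in [:: -1; 0; 1].
Proof. by case/andP=> /forallP/(_ k) + _ /negbTE ek; rewrite ek. Qed.

Lemma inZ_end {u k} : inZ n m u -> endcoord m k -> 0 <= u k < n%:Z.
Proof. by case/andP=> /forallP/(_ k) + _ ek; rewrite ek. Qed.

Lemma inZ_sum {u} : inZ n m u -> (n%:Z %| \sum_k u k)%Z.
Proof. by case/andP. Qed.

Lemma inZ_n_gt0 {u} : inZ n m u -> (0 < n)%N.
Proof.
move=> uZ; have /andP[u0 u0n] := inZ_end (k := ord0) uZ isT.
by rewrite -ltz_nat (le_lt_trans u0 u0n).
Qed.

Lemma inZ_abs_le1 {u k} : inZ n m u -> ~~ endcoord m k -> (absz (u k) <= 1)%N.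
Proof. by move=> uZ /(inZ_inner uZ); rewrite !inE; lia. Qed.

Lemma inZ_abs1 {u k} : inZ n m u -> ~~ endcoord m k -> u k != 0 -> u k = 1 \/ u k = -1.
Proof. by move=> uZ /(inZ_inner uZ); rewrite !inE => /or3P[] /eqP ->; auto. Qed.

Definition reduce k (x : int) : int := if endcoord m k then (x %% n%:Z)%Z else x.

Lemma reduce_inner k x : ~~ endcoord m k -> reduce k x = x.
Proof. by rewrite /reduce => /negbTE ->. Qed.

Lemma dvdz_reduce_sub k x : (n%:Z %| reduce k x - x)%Z.
Proof.
rewrite /reduce; case: ifP => _; last by rewrite subrr dvdz0.
by rewrite {2}(divz_eq x n%:Z) opprD addrCA subrr addr0 rpredN dvdz_mull.
Qed.

Lemma reduce_end k x : (0 < n)%N -> endcoord m k -> 0 <= reduce k x < n%:Z.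
Proof.
move=> n_gt0 ek; have nz : n%:Z != 0 by rewrite eqz_nat -lt0n.
by rewrite /reduce ek modz_ge0 // ltz_mod.
Qed.

Lemma coord_eq_reduce k x a : coord_eq n m k x (reduce k (x + a) - a).
Proof.
rewrite /coord_eq; case: ifP => ek; last by rewrite reduce_inner ?ek // addrK.
rewrite eqz_mod_dvd (_ : x - _ = - (reduce k (x + a) - (x + a))); last by ring.
by rewrite rpredN dvdz_reduce_sub.
Qed.

Definition shift u i j (a : int) : V m :=
  [ffun k => if k == i then reduce i (u i + a)
             else if k == j then reduce j (u j - a) else u k].

Lemma shift_fst u i j a : shift u i j a i = reduce i (u i + a).
Proof. by rewrite ffunE eqxx. Qed.

Lemma shift_snd u i j a : i != j -> shift u i j a j = reduce j (u j - a).
Proof. by rewrite ffunE eq_sym => /negbTE ->; rewrite eqxx. Qed.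

Lemma shift_other u i j a k : k != i -> k != j -> shift u i j a k = u k.
Proof. by rewrite ffunE => /negbTE -> /negbTE ->. Qed.

Lemma sum_shift (Q : pred 'I_m.+2) u i j a : i != j ->
  \sum_(k | Q k) shift u i j a k = \sum_(k | Q k) u k
    + ((if Q i then reduce i (u i + a) - u i else 0)
       + (if Q j then reduce j (u j - a) - u j else 0)).
Proof.
move=> ij; apply/(@addIr _ ((if Q i then u i else 0) + (if Q j then u j else 0))).
rewrite big_off2 // => [|k]; last exact: shift_other.
rewrite shift_fst shift_snd // -addrA; congr (_ + _).
by case: (Q i); case: (Q j); rewrite ?addr0 ?add0r ?subrK // addrACA !subrK.
Qed.

Lemma sum_shift_out (Q : pred 'I_m.+2) u i j a : i != j -> ~~ Q i -> ~~ Q j ->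
  \sum_(k | Q k) shift u i j a k = \sum_(k | Q k) u k.
Proof. by move=> ij /negbTE Qi /negbTE Qj; rewrite sum_shift // Qi Qj !addr0. Qed.

Lemma sum_shift_inner (Q : pred 'I_m.+2) u i j a : i != j ->
  ~~ endcoord m i -> ~~ endcoord m j ->
  \sum_(k | Q k) shift u i j a k =
  \sum_(k | Q k) u k + ((if Q i then a else 0) + (if Q j then - a else 0)).
Proof.
move=> ij ei ej; rewrite sum_shift // !reduce_inner //.
by congr (_ + (_ + _)); case: ifP => _; rewrite // (addrC (u _)) addrK.
Qed.

Lemma dvdz_sum_shift (Q : pred 'I_m.+2) u i j a : i != j -> Q i -> Q j ->
  (n%:Z %| \sum_(k | Q k) shift u i j a k - \sum_(k | Q k) u k)%Z.
Proof.
move=> ij Qi Qj; rewrite sum_shift // Qi Qj addrC addKr.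
rewrite (_ : _ + _ = reduce i (u i + a) - (u i + a) + (reduce j (u j - a) - (u j - a))).
  by rewrite rpredD ?dvdz_reduce_sub.
by ring.
Qed.

Lemma shift_inZ u i j a : inZ n m u -> i != j ->
  (~~ endcoord m i -> u i + a \in [:: -1; 0; 1]) ->
  (~~ endcoord m j -> u j - a \in [:: -1; 0; 1]) -> inZ n m (shift u i j a).
Proof.
move=> uZ ij ai aj; have n_gt0 := inZ_n_gt0 uZ; apply/andP; split.
  apply/forallP => k; case: (eqVneq k i) => [->|ki].
    by rewrite shift_fst; case: ifPn => ei; [apply: reduce_end | rewrite reduce_inner // ai].
  case: (eqVneq k j) => [->|kj].
    by rewrite shift_snd //; case: ifPn => ej; [apply: reduce_end | rewrite reduce_inner // aj].
  by rewrite shift_other //; case: ifPn => ek; [apply: inZ_end | apply: inZ_inner].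
by rewrite -[\sum_k _](subrK (\sum_k u k)) rpredD ?inZ_sum ?dvdz_sum_shift.
Qed.

Lemma shift_adj u i j a : inZ n m u -> j = i.+1 :> nat -> (a = 1 \/ a = -1) ->
  inZ n m (shift u i j a) -> adj n m u (shift u i j a).
Proof.
move=> uZ ji a1 u'Z; have ij : i != j by apply/eqP => ij; move: ji; rewrite ij; lia.
rewrite /adj uZ u'Z; apply/existsP; exists i; apply/existsP; exists j.
rewrite ji eqxx /=; apply/andP; split.
  by apply/forallP => k; apply/implyP => /andP[ki kj]; rewrite shift_other.
have ci := coord_eq_reduce i (u i) a; have cj := coord_eq_reduce j (u j) (- a).
rewrite -(shift_fst u i j) in ci; rewrite opprK -(shift_snd u i j a ij) in cj.
by case: a1 => -> in ci cj *; rewrite ?opprK ci cj ?orbT.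
Qed.

Lemma inZ_eq0 u : inZ n m u -> (n%:Z %| u ord0)%Z ->
  (forall k, ~~ endcoord m k -> u k = 0) -> u = zeroV m.
Proof.
move=> uZ dvd0 inner0.
have u0 : u ord0 = 0 by apply: dvdz_small_eq0 dvd0; apply: inZ_end uZ _; rewrite /endcoord eqxx.
have u_nmax k : k != ord_max -> u k = 0.
  by move=> kmax; case: (eqVneq k ord0) => [-> //|k0]; apply: inner0; rewrite /endcoord negb_or k0.
have umax : u ord_max = 0.
  apply: dvdz_small_eq0; first by apply: inZ_end uZ _; rewrite /endcoord eqxx orbT.
  by have := inZ_sum uZ; rewrite (bigD1 ord_max) //= big1 ?addr0.
by apply/ffunP => k; rewrite ffunE; case: (eqVneq k ord_max) => [->|/u_nmax].
Qed.

Lemma dist_le_refl u (k : nat) : inZ n m u -> dist_le n m u u k.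
Proof. by move=> uZ; exists [::]; rewrite /= uZ. Qed.

Lemma dist_le_adj {u u' w} {k : nat} : adj n m u u' -> dist_le n m u' w k -> dist_le n m u w k.+1.
Proof.
move=> uu' [p [pZ pp plast psize]]; exists (u' :: p); split => //=.
- by case/and3P: uu' => ->.
- by rewrite uu'.
Qed.

Section Potential.
Variables L R : nat.
Hypothesis L_le_R : (L <= R)%N.
Hypothesis R_le_m : (R <= m)%N.
Implicit Types g : 'I_m.+2.

Definition weight (k : nat) : nat :=
  if (1 <= k <= L)%N then k else if (R < k <= m)%N then (m.+1 - k)%N else 0%N.

Definition cumsum u (g : nat) : int := \sum_(k < m.+2 | (L < k <= g)%N) u k.

Definition outer_cost u : nat := \sum_(k < m.+2) weight k * absz (u k).

Definition inner_cost u : nat := \sum_(g < m.+2 | (L < g < R)%N) absz (cumsum u g).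

Definition potential u : nat := outer_cost u + inner_cost u.

Definition admissible u : Prop :=
  [/\ inZ n m u, (n%:Z %| psum m u L.+1)%Z & cumsum u R = 0].

Definition improves u u' : Prop :=
  [/\ adj n m u u', admissible u' & (potential u' < potential u)%N].

Lemma cumsumL u : cumsum u L = 0.
Proof. by rewrite /cumsum big_pred0 // => k; lia. Qed.

Lemma cumsumS u g : (L < g)%N -> cumsum u g = cumsum u g.-1 + u g.
Proof.
move=> Lg; rewrite /cumsum (bigD1 g) /=; last lia.
by rewrite addrC; congr (_ + _); apply: eq_bigl => k; rewrite -val_eqE /=; lia.
Qed.

Lemma cumsum_shift_out u i j a (g : nat) : i != j -> ~~ (L < i <= R)%N -> ~~ (L < j <= R)%N ->
  (g <= R)%N -> cumsum (shift u i j a) g = cumsum u g.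
Proof. by move=> ij iLR jLR gR; rewrite /cumsum sum_shift_out //; lia. Qed.

Lemma cumsum_shift_succ u g a (h : nat) : (L < g < m)%N ->
  cumsum (shift u g (inord g.+1) a) h = cumsum u h + (if h == g :> nat then a else 0).
Proof.
move=> gm; have gS : (inord g.+1 : 'I_m.+2) = g.+1 :> nat by rewrite inordK //; lia.
rewrite /cumsum sum_shift_inner -?inner_endcoord ?gS //; try lia; last first.
  by apply/eqP => /(congr1 val) /=; rewrite gS; lia.
congr (_ + _); have Lg : (L < g)%N by lia.
case: (eqVneq h g) => [->|hg]; first by rewrite Lg leqnn ltnn andbF addr0.
case: (leqP g h) => gh; last by rewrite !ifF ?addr0 //; lia.
by rewrite Lg (_ : (L < g.+1 <= h)%N) ?subrr //; lia.
Qed.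

Lemma outer_cost_shift u i j a : i != j ->
  (outer_cost (shift u i j a) + (weight i * absz (u i) + weight j * absz (u j)) =
   outer_cost u + (weight i * absz (shift u i j a i) + weight j * absz (shift u i j a j)))%N.
Proof.
move=> ij; apply: (big_off2 predT (fun k => weight k * absz (shift u i j a k))%N) => // k ki kj.
by rewrite shift_other.
Qed.

Lemma improves_shift_out u i j a : admissible u -> j = i.+1 :> nat -> (a = 1 \/ a = -1) ->
  inZ n m (shift u i j a) -> ~~ (L < i <= R)%N -> ~~ (L < j <= R)%N ->
  (n%:Z %| psum m (shift u i j a) L.+1)%Z ->
  (weight i * absz (shift u i j a i) + weight j * absz (shift u i j a j) <
   weight i * absz (u i) + weight j * absz (u j))%N ->
  improves u (shift u i j a).
Proof.
case=> uZ _ cR ji a1 u'Z iLR jLR dvdL wlt.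
have ij : i != j by apply/eqP => ij; move: ji; rewrite ij; lia.
split; [exact: shift_adj | split=> // | ]; first by rewrite cumsum_shift_out.
have := outer_cost_shift u i j a ij; rewrite /potential.
have -> : inner_cost (shift u i j a) = inner_cost u.
  by apply: eq_bigr => g /andP[_ gR]; rewrite cumsum_shift_out //; lia.
lia.
Qed.


Lemma left_move u i : admissible u -> (1 <= i <= L)%N -> u i != 0 ->
  ((1 < i)%N -> u (inord i.-1) = 0) -> improves u (shift u (inord i.-1) i (u i)).
Proof.
case=> uZ dvdL cR iL ui0 prev0; set lo : 'I_m.+2 := inord i.-1; set u' := shift u lo i (u i).
have lo_val : lo = i.-1 :> nat by rewrite inordK //; lia.
have lo_i : lo != i by apply/eqP => loi; move: lo_val; rewrite loi; lia.
have ei : ~~ endcoord m i by rewrite -inner_endcoord; lia.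
have ui1 := inZ_abs1 uZ ei ui0.
have u'Z : inZ n m u'.
  apply: shift_inZ => // [elo|_]; last by rewrite subrr !inE.
  by rewrite prev0 ?add0r ?(inZ_inner uZ ei) //; move: elo; rewrite -inner_endcoord; lia.
have u'i : u' i = 0 by rewrite shift_snd // subrr reduce_inner.
have u'lo : (weight lo * absz (u' lo) <= i.-1)%N.
  case: (boolP (endcoord m lo)) => elo.
    by move: elo; rewrite endcoordE /weight lo_val; case: ifP; [|case: ifP]; lia.
  by have := inZ_abs_le1 u'Z elo; rewrite /weight lo_val; case: ifP; [|case: ifP]; nia.
apply: improves_shift_out => //; try (rewrite ?lo_val; lia).
- rewrite -[psum _ _ _](subrK (psum m u L.+1)) rpredD //.
  by apply: dvdz_sum_shift => //=; lia.
- have wi : weight i = i by rewrite /weight iL.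
  have ui_abs : absz (u i) = 1%N by case: ui1 => ->.
  by rewrite -/u' u'i muln0 addn0 wi ui_abs; lia.
Qed.

Lemma right_move u i : admissible u -> (R < i <= m)%N -> u i != 0 ->
  ((i < m)%N -> u (inord i.+1) = 0) -> improves u (shift u i (inord i.+1) (- u i)).
Proof.
case=> uZ dvdL cR iR ui0 next0; set hi : 'I_m.+2 := inord i.+1; set u' := shift u i hi (- u i).
have hi_val : hi = i.+1 :> nat by rewrite inordK //; lia.
have i_hi : i != hi by apply/eqP => ihi; move: hi_val; rewrite -ihi; lia.
have ei : ~~ endcoord m i by rewrite -inner_endcoord; lia.
have ui1 := inZ_abs1 uZ ei ui0.
have u'Z : inZ n m u'.
  apply: shift_inZ => // [_|ehi]; first by rewrite subrr !inE.
  by rewrite next0 ?opprK ?add0r ?(inZ_inner uZ ei) //; move: ehi; rewrite -inner_endcoord; lia.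
have u'i : u' i = 0 by rewrite shift_fst // subrr reduce_inner.
have u'hi : (weight hi * absz (u' hi) <= m - i)%N.
  case: (boolP (endcoord m hi)) => ehi.
    by move: ehi; rewrite endcoordE /weight hi_val; case: ifP; [|case: ifP]; lia.
  by have := inZ_abs_le1 u'Z ehi; rewrite /weight hi_val; case: ifP; [|case: ifP]; nia.
apply: improves_shift_out => //; try (rewrite ?hi_val; lia).
- by rewrite /psum sum_shift_out //; lia.
- have wi : weight i = (m.+1 - i)%N by rewrite /weight iR; case: ifP => //; lia.
  have ui_abs : absz (u i) = 1%N by case: ui1 => ->.
  by rewrite -/u' u'i muln0 add0n wi ui_abs; lia.
Qed.

Lemma mid_move u g : admissible u -> (L < g < R)%N -> cumsum u g != 0 ->
  (forall h : 'I_m.+2, (L < h < R)%N -> (absz (cumsum u h) <= absz (cumsum u g))%N) ->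
  improves u (shift u g (inord g.+1) (if 0 < cumsum u g then -1 else 1)).
Proof.
case=> uZ dvdL cR gLR Pg0 Pmax; set hi : 'I_m.+2 := inord g.+1.
set a : int := if 0 < cumsum u g then -1 else 1; set u' := shift u g hi a.
have hi_val : hi = g.+1 :> nat by rewrite inordK //; lia.
have g_hi : g != hi by apply/eqP => ghi; move: hi_val; rewrite -ghi; lia.
have eg : ~~ endcoord m g by rewrite -inner_endcoord; lia.
have ehi : ~~ endcoord m hi by rewrite -inner_endcoord hi_val; lia.
have a1 : a = 1 \/ a = -1 by rewrite /a; case: ifP; auto.
have cumsum_u' h : cumsum u' h = cumsum u h + (if h == g :> nat then a else 0).
  by apply: cumsum_shift_succ; lia.
have Pprev : (absz (cumsum u g.-1) <= absz (cumsum u g))%N.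
  case: (ltnP L g.-1) => Lg; last by rewrite (_ : g.-1 = L) ?cumsumL //; lia.
  by have := Pmax (inord g.-1); rewrite inordK; [apply|]; lia.
have Pnext : (absz (cumsum u hi) <= absz (cumsum u g))%N.
  case: (ltnP hi R) => hiR; first by apply: Pmax; lia.
  by rewrite (_ : hi = R :> nat) ?cR //; lia.
have ug := inZ_inner uZ eg; have uhi := inZ_inner uZ ehi.
rewrite !inE in ug uhi; move: (cumsumS u g) (cumsumS u hi); rewrite hi_val /= -hi_val.
move=> /(_ ltac:(lia)) Pg /(_ ltac:(lia)) Phi.
(* Maximality of |P_g| keeps u_g + a and u_(g+1) - a in {-1, 0, 1}. *)
have u'Z : inZ n m u'.
  by apply: shift_inZ => // _; rewrite !inE /a; case: ifP; lia.
split; first exact: shift_adj.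
  split=> //; last by rewrite cumsum_u' ifN ?addr0 //; lia.
  by rewrite /psum sum_shift_out //; lia.
have wg : weight g = 0%N by rewrite /weight; case: ifP; [|case: ifP]; lia.
have whi : weight hi = 0%N by rewrite /weight hi_val; case: ifP; [|case: ifP]; lia.
have := outer_cost_shift u g hi a g_hi; rewrite wg whi !mul0n !addn0 => outer_eq.
rewrite /potential outer_eq ltn_add2l /inner_cost (bigD1 g) // [X in (_ < X)%N](bigD1 g) //=.
rewrite (eq_bigr (fun h : 'I_m.+2 => absz (cumsum u h))) => [|h /andP[_ hg]]; last first.
  by rewrite cumsum_u' ifN ?addr0 // -(inj_eq val_inj).
by rewrite ltn_add2r cumsum_u' eqxx /a; case: ifP; lia.
Qed.

Lemma admissible_eq0 u : admissible u ->
  (forall i, (1 <= i <= L)%N -> u i = 0) -> (forall i, (R < i <= m)%N -> u i = 0) ->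
  (forall g, (L < g < R)%N -> cumsum u g = 0) -> u = zeroV m.
Proof.
case=> uZ dvdL cR left0 right0 mid0.
have cumsum0 (h : nat) : (L <= h <= R)%N -> cumsum u h = 0.
  case: (ltngtP L h) => [Lh hR|//|<- _]; last exact: cumsumL.
  case: (ltngtP h R) hR => [hR _|//|-> _ //].
  by have := mid0 (inord h); rewrite inordK; [apply|]; lia.
apply: inZ_eq0 => // [|k ek].
  move: dvdL; rewrite /psum (bigD1 ord0) //= big1 ?addr0 // => k /andP[kL k0].
  by apply: left0; move: k0; rewrite -val_eqE /=; lia.
move: ek; rewrite -inner_endcoord => km.
case: (leqP k L) => kL; first by apply: left0; lia.
case: (leqP k R) => kR; last by apply: right0; lia.
by have := cumsumS u k kL; rewrite !cumsum0 ?add0r //; lia.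
Qed.

Lemma improves_exists u : admissible u -> u != zeroV m -> exists u', improves u u'.
Proof.
move=> adm u_nz.
pose left_nz i := (1 <= i <= L)%N && (u i != 0).
pose right_nz i := (R < i <= m)%N && (u i != 0).
pose mid g := (L < g < R)%N.
pose mid_nz g := mid g && (cumsum u g != 0).
case: (pickP left_nz) => [i0 Pi0|left0].
  have [i /andP[iL ui0] imin] := arg_minnP (@nat_of_ord _) Pi0.
  exists (shift u (inord i.-1) i (u i)); apply: left_move => // i_gt1.
  apply/eqP/negPn/negP => uprev; have := imin (inord i.-1).
  by rewrite /left_nz inordK ?uprev ?andbT; lia.
case: (pickP right_nz) => [i0 Pi0|right0].
  have [i /andP[iR ui0] imax] := arg_maxnP (@nat_of_ord _) Pi0.
  exists (shift u i (inord i.+1) (- u i)); apply: right_move => // i_ltm.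
  apply/eqP/negPn/negP => unext; have := imax (inord i.+1).
  by rewrite /right_nz inordK ?unext ?andbT; lia.
case: (pickP mid_nz) => [g0 /andP[g0LR Pg0]|mid0].
  have [g gLR gmax] := arg_maxnP (fun g => absz (cumsum u g)) g0LR.
  exists (shift u g (inord g.+1) (if 0 < cumsum u g then -1 else 1)); apply: mid_move => //.
  by have := gmax g0 g0LR; move: Pg0; rewrite -absz_eq0; lia.
case/eqP: u_nz; apply: admissible_eq0 => // [i iL|i iR|g gLR]; apply/eqP.
- by have := left0 i; rewrite /left_nz iL => /negbT; rewrite negbK.
- by have := right0 i; rewrite /right_nz iR => /negbT; rewrite negbK.
- by have := mid0 g; rewrite /mid_nz /mid gLR => /negbT; rewrite negbK.
Qed.

Lemma admissible_dist_le u (k : nat) : admissible u -> (potential u <= k)%N ->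
  dist_le n m u (zeroV m) k.
Proof.
elim: k u => [|k IH] u + uk; have [-> [uZ _ _]|u_nz adm] := eqVneq u (zeroV m);
  try exact: dist_le_refl; have [u' [uu' adm' lt']] := improves_exists u adm u_nz; first lia.
by apply: dist_le_adj uu' (IH u' adm' _); lia.
Qed.

Lemma sum_weight : (\sum_(k < m.+2) weight k =
  \sum_(1 <= i < L.+1) i + \sum_(1 <= i < (m - R).+1) i)%N.
Proof.
rewrite (eq_bigr (fun k : 'I_m.+2 => (if 1 <= k < L.+1 then k : nat else 0)
    + (if R.+1 <= k < m.+1 then m.+1 - k else 0))%N) => [|k _]; last first.
  by rewrite /weight; repeat (case: ifP => ?); lia.
rewrite big_split -!big_mkcond /= (big_ord_range _ _ _ _ id); last lia.
rewrite (big_ord_range _ _ _ _ (subn m.+1)); last lia.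
congr (_ + _); rewrite big_nat_rev -[R.+1]add1n big_addn -subSn //.
by apply: eq_big_nat => i; lia.
Qed.

Lemma outer_cost_le u : inZ n m u -> (outer_cost u <= \sum_(k < m.+2) weight k)%N.
Proof.
move=> uZ; apply: leq_sum => k _; case: (boolP (endcoord m k)) => ek.
  by move: ek; rewrite endcoordE /weight; repeat (case: ifP => ?); lia.
by have := inZ_abs_le1 uZ ek; nia.
Qed.

Lemma abs_cumsum_sub_le u (g h : nat) : inZ n m u -> (L <= g <= h)%N -> (h <= m)%N ->
  (absz (cumsum u h - cumsum u g) <= h - g)%N.
Proof.
move=> uZ /andP[Lg gh]; rewrite -(subnKC gh); elim: (h - g)%N => [|d IH] hm.
  by rewrite addn0 subrr.
rewrite addnS in hm *.
have ek : ~~ endcoord m (inord (g + d).+1) by rewrite -inner_endcoord inordK; lia.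
have := cumsumS u (inord (g + d).+1); rewrite inordK; last lia.
move=> /(_ ltac:(lia)) /= ->.
by have := IH ltac:(lia); have := inZ_abs_le1 uZ ek; lia.
Qed.

Lemma inner_cost_le u : admissible u -> (inner_cost u <= (R - L)./2 * uphalf (R - L))%N.
Proof.
case=> uZ _ cR; rewrite -sum_min_dist.
apply: (@leq_trans (\sum_(g < m.+2 | L < g < R) minn (g - L) (R - g))%N).
  apply: leq_sum => g gLR; rewrite leq_min.
  have := abs_cumsum_sub_le u L g uZ; have := abs_cumsum_sub_le u g R uZ.
  by rewrite cumsumL cR; lia.
rewrite (big_ord_range _ _ _ _ (fun t : nat => minn (t - L) (R - t))%N); last lia.
rewrite -[L.+1]add1n big_addn.
by apply/eq_leq/eq_big_nat => i; lia.
Qed.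

Lemma potential_le u : admissible u -> (potential u <=
  \sum_(1 <= i < L.+1) i + \sum_(1 <= i < (m - R).+1) i + (R - L)./2 * uphalf (R - L))%N.
Proof.
move=> adm; rewrite /potential -sum_weight leq_add ?inner_cost_le //.
by case: adm => uZ _ _; apply: outer_cost_le.
Qed.

Lemma cumsum_iota u : cumsum u R = \sum_(i <- iota L.+1 (R - L)) u (inord i).
Proof.
rewrite /cumsum (eq_bigr (fun k : 'I_m.+2 => u (inord k))) => [|k _]; last by rewrite inord_val.
rewrite (eq_bigl (fun k : 'I_m.+2 => L < k < R.+1)%N) //.
by rewrite (big_ord_range _ _ _ _ (fun t : nat => u (inord t))) //; lia.
Qed.

Lemma admissible_dist_le_zero u : admissible u -> dist_le n m u (zeroV m)
  (\sum_(1 <= i < L.+1) i + \sum_(1 <= i < (m - R).+1) i + (R - L)./2 * uphalf (R - L))%N.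
Proof. by move=> adm; apply: (admissible_dist_le u _ adm (potential_le u adm)). Qed.

End Potential.

End Znm.

Section Pivots.
Local Open Scope ring_scope.
Context {n m : nat} {v : V m}.

Lemma pl_spec :
  exists q : nat, [/\ pl n m v = q%:Z - 1, (n%:Z %| psum m v q)%Z & (2 * q < m + 2)%N].
Proof.
set K := fun q : nat => (n%:Z %| psum m v q)%Z && (2 * q < m + 2)%N.
have : K (\max_(q < m.+3 | K q) q).
  apply: (big_ind K) => // [|x y]; last by case: (leqP x y).
  by rewrite /K /psum big_pred0 // dvdz0 muln0 addn2.
by case/andP; eexists.
Qed.

Lemma pr_spec : inZ n m v -> exists q : nat,
  [/\ pr n m v = q%:Z - 1, (n%:Z %| psum m v q)%Z, (m + 2 <= 2 * q)%N & (q <= m.+2)%N].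
Proof.
move=> vZ; set K := fun q : nat => (n%:Z %| psum m v q)%Z && (m + 2 <= 2 * q)%N.
have : K (\big[minn/m.+2]_(q < m.+3 | K q) q) && (\big[minn/m.+2]_(q < m.+3 | K q) q <= m.+2)%N.
  apply: (big_ind (fun q => K q && (q <= m.+2)%N)) => [|x y|i Ki].
  - rewrite /K /psum (eq_bigl xpredT) ?inZ_sum //=; last by move=> k; rewrite ltn_ord.
    by apply/andP; split; lia.
  - by case: (leqP x y).
  - by rewrite Ki -ltnS ltn_ord.
by case/andP=> /andP[]; eexists.
Qed.

Lemma central_interval : inZ n m v -> all (fun i => 1 <= i <= m)%N (Ic n m v) ->
  exists L R : nat,
    [/\ pl n m v = L%:Z, pr n m v = R%:Z, (L < R <= m)%N & (n%:Z %| psum m v L.+1)%Z].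
Proof.
move=> vZ Ic_inner; have [qL [plE dvdL qLm]] := pl_spec.
have [qR [prE dvdR qRm qRle]] := pr_spec vZ.
have Ic_mem i : (i < m.+2)%N -> (qL <= i < qR)%N -> (1 <= i <= m)%N.
  move=> im iI; apply: (allP Ic_inner); rewrite mem_filter mem_iota plE prE /=; lia.
have qL_gt0 : (0 < qL)%N by have := Ic_mem 0%N; lia.
have qR_le : (qR <= m.+1)%N by have := Ic_mem m.+1; lia.
exists qL.-1, qR.-1; split; rewrite ?prednK //; try lia.
Qed.

Lemma Ic_between {L R : nat} : pl n m v = L%:Z -> pr n m v = R%:Z -> (R <= m)%N ->
  Ic n m v = iota L.+1 (R - L).
Proof.
move=> plL prR Rm; apply: (irr_sorted_eq ltn_trans ltnn).
- exact/sorted_filter/iota_ltn_sorted/ltn_trans.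
- exact: iota_ltn_sorted.
- by move=> i; rewrite mem_filter !mem_iota plL prR ltz_nat lez_nat; lia.
Qed.

End Pivots.

Theorem lemma5p28 (n m : nat) (v : V m) :
  1 < n -> n <= m -> inZ n m v ->
  all (fun i => 1 <= i <= m) (Ic n m v) ->
  (\sum_(i <- Ic n m v) v (inord i))%R = 0%R ->
  dist_le n m v (zeroV m)
    (\sum_(1 <= i < (absz (pl n m v)).+1) i
     + \sum_(1 <= i < (m - absz (pr n m v)).+1) i
     + (size (Ic n m v))./2 * uphalf (size (Ic n m v))).
Proof.
move=> _ _ vZ Ic_inner Ic_sum0.
have [L [R [plL prR /andP[LR Rm] dvdL]]] := central_interval vZ Ic_inner.
have L_le_R := ltnW LR; have IcE := Ic_between plL prR Rm.
have adm : admissible n m L R v.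
  by split=> //; rewrite (cumsum_iota m L R L_le_R Rm) -IcE.
rewrite plL prR IcE size_iota /=.
exact: admissible_dist_le_zero n m L R L_le_R Rm v adm.
Qed.
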